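(* Let $x\in\mathbb{R}\setminus D$. If at least one of $\limsup_n G_n'(x)$, $\liminf_n G_n'(x)$ is infinite, or if both are finite and $$\limsup_n G_n'(x)-\liminf_n G_n'(x)>2,$$ then $\partial^+T(x)=\varnothing$.
   Context: Let $\phi(x)=\operatorname{dist}(x,\mathbb{Z})$ and let $T(x)=\sum_{n=0}^\infty 2^{-n}\phi(2^nx)$ be the Takagi function. For $n\ge1$ let $D_n=\{k/2^{n-1}:k\in\mathbb{Z}\}$, $D=\bigcup_nD_n$, $g_k(x)=\operatorname{dist}(x,D_k)$, $G_n=g_1+\dots+g_n$. For $x\notin D$, $G_n'(x)$ exists and is an integer. The Fréchet superdifferential of an upper semicontinuous $f:\mathbb{R}\to\mathbb{R}$ at $x$ is $\partial^+f(x)=\{\xi\in\mathbb{R}: \limsup_{h\to0}\frac{f(x+h)-f(x)-\xi h}{|h|}\le0\}$. *)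

From Stdlib Require Import Reals Lra.
Open Scope R_scope.

(* phi(x) = dist(x, Z) *)
Definition phi (x : R) : R := Rmin (frac_part x) (1 - frac_part x).

(* The Takagi series T(x) = sum_{n>=0} 2^{-n} phi(2^n x) : its n-th term. *)
Definition takagi_term (x : R) (n : nat) : R := phi (2 ^ n * x) / 2 ^ n.

Definition in_D (x : R) : Prop :=
  exists (n : nat) (k : Z), (1 <= n)%nat /\ x = IZR k / 2 ^ (n - 1).

(* g_k(x) = dist(x, D_k) = 2^{-(k-1)} dist(2^{k-1} x, Z), since D_k = 2^{-(k-1)} Z *)
Definition g (k : nat) (x : R) : R := phi (2 ^ (k - 1) * x) / 2 ^ (k - 1).

Fixpoint G (n : nat) (x : R) : R :=
  match n with
  | O => 0
  | S m => G m x + g (S m) x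
  end.

Definition limsup_is (u : nat -> R) (L : R) : Prop :=
  forall eps, eps > 0 ->
    (exists N, forall n, (N <= n)%nat -> u n < L + eps) /\
    (forall N, exists n, (N <= n)%nat /\ u n > L - eps).
Definition liminf_is (u : nat -> R) (L : R) : Prop :=
  forall eps, eps > 0 ->
    (exists N, forall n, (N <= n)%nat -> u n > L - eps) /\
    (forall N, exists n, (N <= n)%nat /\ u n < L + eps).
Definition limsup_pinfty (u : nat -> R) : Prop :=
  forall M N, exists n, (N <= n)%nat /\ u n > M.
Definition limsup_minfty (u : nat -> R) : Prop :=
  forall M, exists N, forall n, (N <= n)%nat -> u n < M.
Definition liminf_pinfty (u : nat -> R) : Prop :=
  forall M, exists N, forall n, (N <= n)%nat -> u n > M.
Definition liminf_minfty (u : nat -> R) : Prop :=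
  forall M N, exists n, (N <= n)%nat /\ u n < M.

Definition frechet_superdiff (f : R -> R) (x xi : R) : Prop :=
  forall eps, eps > 0 -> exists delta, delta > 0 /\
    forall h, h <> 0 -> Rabs h < delta ->
      (f (x + h) - f x - xi * h) / Rabs h <= eps.

From Stdlib Require Import Reals Lra Lia ZArith.
Open Scope R_scope.

Lemma Int_part_eq (k : Z) (r : R) : IZR k <= r < IZR k + 1 -> Int_part r = k.
Proof. intros H. symmetry. apply Int_part_spec. lra. Qed.

Lemma Int_part_bounds (r : R) : IZR (Int_part r) <= r < IZR (Int_part r) + 1.
Proof. destruct (base_Int_part r). lra. Qed.

Lemma Int_part_half (a : R) : Int_part a = (Int_part (2 * a) / 2)%Z.
Proof.
  pose proof (Int_part_bounds (2 * a)) as [Hlo Hhi].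
  set (m := Int_part (2 * a)) in *.
  pose proof (Z.mod_pos_bound m 2). pose proof (Z.div_mod m 2).
  assert (Hq1 : (2 * (m / 2) <= m)%Z) by lia.
  assert (Hq2 : (m + 1 <= 2 * (m / 2) + 2)%Z) by lia.
  apply IZR_le in Hq1, Hq2. rewrite mult_IZR in Hq1. rewrite !plus_IZR, mult_IZR in Hq2.
  apply Int_part_eq. lra.
Qed.

Lemma pow2_pos (n : nat) : 0 < 2 ^ n.
Proof. apply pow_lt. lra. Qed.

Lemma pow2_int (p : nat) : exists k : Z, 2 ^ p = IZR k.
Proof.
  induction p as [|p [k Hk]].
  - exists 1%Z. reflexivity.
  - exists (2 * k)%Z. rewrite mult_IZR, <- Hk. reflexivity.
Qed.

Lemma phi_left (k : Z) (z : R) : IZR k <= z <= IZR k + 1/2 -> phi z = z - IZR k.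
Proof.
  intros H. unfold phi, frac_part.
  rewrite (Int_part_eq k z) by lra. unfold Rmin. destruct Rle_dec; lra.
Qed.

Lemma phi_right (k : Z) (z : R) : IZR k + 1/2 <= z <= IZR k + 1 -> phi z = IZR k + 1 - z.
Proof.
  intros H. destruct (Req_dec z (IZR k + 1)) as [E|E].
  - rewrite (phi_left (k + 1) z); rewrite plus_IZR; lra.
  - unfold phi, frac_part. rewrite (Int_part_eq k z) by lra.
    unfold Rmin. destruct Rle_dec; lra.
Qed.

Lemma phi_periodic (z : R) (k : Z) : phi (z + IZR k) = phi z.
Proof.
  pose proof (Int_part_bounds z).
  unfold phi, frac_part.
  rewrite (Int_part_eq (Int_part z + k) (z + IZR k)) by (rewrite plus_IZR; lra).
  rewrite plus_IZR. f_equal; ring.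
Qed.

(* The slope of phi at z on the right. *)
Definition dphi (z : R) : R := if Rlt_dec (frac_part z) (1/2) then 1 else -1.

Lemma dphi_pm1 (z : R) : dphi z = 1 \/ dphi z = -1.
Proof. unfold dphi. destruct Rlt_dec; [left | right]; reflexivity. Qed.

Lemma phi_affine (z w : R) :
  Int_part (2 * z) = Int_part (2 * w) -> phi w - phi z = dphi z * (w - z).
Proof.
  intros E.
  pose proof (Int_part_half z) as Hz. pose proof (Int_part_half w) as Hw.
  rewrite <- E in Hw.
  pose proof (Int_part_bounds z) as [Z1 Z2]. pose proof (Int_part_bounds w) as [W1 W2].
  pose proof (Int_part_bounds (2 * z)) as [M1 M2]. pose proof (Int_part_bounds (2 * w)) as [N1 N2].
  rewrite <- E in N1, N2. rewrite Hz in Z1, Z2. rewrite Hw in W1, W2.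
  unfold dphi, frac_part. rewrite Hz.
  set (m := Int_part (2 * z)) in *. set (k := (m / 2)%Z) in *.
  assert (Hm : m = (2 * k)%Z \/ m = (2 * k + 1)%Z)
    by (unfold k; pose proof (Z.mod_pos_bound m 2); pose proof (Z.div_mod m 2); lia).
  destruct Hm as [Hm | Hm]; apply (f_equal IZR) in Hm; rewrite ?plus_IZR, mult_IZR in Hm.
  - rewrite (phi_left k z), (phi_left k w) by lra. destruct Rlt_dec; lra.
  - rewrite (phi_right k z), (phi_right k w) by lra. destruct Rlt_dec; lra.
Qed.

(* The slope of G_n on the dyadic interval of length 2^-n containing x. *)
Fixpoint slope (n : nat) (x : R) : R :=
  match n with
  | O => 0
  | S m => slope m x + dphi (2 ^ m * x)
  end.

Lemma G_succ (n : nat) (y : R) : G (S n) y = G n y + takagi_term y n.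
Proof. simpl G. unfold g, takagi_term. now rewrite Nat.sub_succ, Nat.sub_0_r. Qed.

Lemma G_partial_sum (m : nat) (y : R) : G (S m) y = sum_f_R0 (takagi_term y) m.
Proof.
  induction m as [|m IH].
  - rewrite G_succ. simpl. ring.
  - rewrite G_succ, IH. reflexivity.
Qed.

Lemma G_affine (n : nat) (x y : R) :
  Int_part (2 ^ n * x) = Int_part (2 ^ n * y) -> G n y - G n x = slope n x * (y - x).
Proof.
  revert x y. induction n as [|n IH]; intros x y E.
  - simpl. ring.
  - rewrite !G_succ. simpl slope.
    replace (2 ^ S n * x) with (2 * (2 ^ n * x)) in E by (simpl; ring).
    replace (2 ^ S n * y) with (2 * (2 ^ n * y)) in E by (simpl; ring).
    assert (E' : Int_part (2 ^ n * x) = Int_part (2 ^ n * y))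
      by (rewrite (Int_part_half (2 ^ n * x)), (Int_part_half (2 ^ n * y)), E; reflexivity).
    pose proof (IH _ _ E') as HG. pose proof (phi_affine _ _ E) as Hphi.
    pose proof (pow2_pos n).
    assert (Hterm : takagi_term y n - takagi_term x n = dphi (2 ^ n * x) * (y - x)).
    { unfold takagi_term, Rdiv. rewrite <- Rmult_minus_distr_r, Hphi. field. lra. }
    lra.
Qed.

Lemma G_derivative (n : nat) (x : R) :
  frac_part (2 ^ n * x) <> 0 -> derivable_pt_lim (G n) x (slope n x).
Proof.
  intros Hf eps Heps.
  set (f := frac_part (2 ^ n * x)) in *.
  assert (Hf0 : 0 < f < 1).
  { pose proof (Int_part_bounds (2 ^ n * x)). unfold f, frac_part in *. lra. }
  pose proof (pow2_pos n).
  assert (Hr : 0 < Rmin f (1 - f) / 2 ^ n)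
    by (apply Rdiv_lt_0_compat; [unfold Rmin; destruct Rle_dec|]; lra).
  exists (mkposreal _ Hr). intros h Hh Hlt. simpl in Hlt.
  assert (Hsmall : Rabs (2 ^ n * h) < Rmin f (1 - f)).
  { rewrite Rabs_mult, (Rabs_right (2 ^ n)) by lra.
    apply (Rmult_lt_compat_l (2 ^ n)) in Hlt; [|lra].
    replace (2 ^ n * (Rmin f (1 - f) / 2 ^ n)) with (Rmin f (1 - f)) in Hlt by (field; lra).
    exact Hlt. }
  assert (E : Int_part (2 ^ n * x) = Int_part (2 ^ n * (x + h))).
  { symmetry. apply Int_part_eq.
    pose proof (Rmin_l f (1 - f)). pose proof (Rmin_r f (1 - f)).
    apply Rabs_def2 in Hsmall. unfold f, frac_part in *. lra. }
  replace ((G n (x + h) - G n x) / h - slope n x) with 0.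
  - rewrite Rabs_R0. lra.
  - rewrite (G_affine _ _ _ E). field. exact Hh.
Qed.

Lemma not_in_D_frac (x : R) : ~ in_D x -> forall n, frac_part (2 ^ n * x) <> 0.
Proof.
  intros hx n Hf. apply hx. exists (S n), (Int_part (2 ^ n * x)). split; [lia|].
  rewrite Nat.sub_succ, Nat.sub_0_r. unfold frac_part in Hf.
  pose proof (pow2_pos n).
  replace (IZR (Int_part (2 ^ n * x))) with (2 ^ n * x) by lra. field. lra.
Qed.

Lemma derivatives_are_slopes (x : R) (hx : ~ in_D x) (d : nat -> R)
  (hd : forall n, (1 <= n)%nat -> derivable_pt_lim (G n) x (d n)) :
  forall n, (1 <= n)%nat -> d n = slope n x.
Proof.
  intros n Hn. apply (uniqueness_limite (G n) x); [apply hd; exact Hn|].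
  apply G_derivative, not_in_D_frac, hx.
Qed.

Lemma eventually_constant_limit (u : nat -> R) (l C : R) (N0 : nat) :
  Un_cv u l -> (forall N, (N0 <= N)%nat -> u N = C) -> l = C.
Proof.
  intros Hu Hc. apply (UL_sequence u); [exact Hu|].
  intros eps Heps. exists N0. intros n Hn. rewrite Hc by lia.
  unfold Rdist. rewrite Rminus_diag, Rabs_R0. exact Heps.
Qed.

Lemma takagi_difference (T : R -> R)
  (HT : forall y, infinite_sum (takagi_term y) (T y)) (y x : R) (K : nat) :
  (forall j, (K < j)%nat -> takagi_term y j = takagi_term x j) ->
  T y - T x = G (S K) y - G (S K) x.
Proof.
  intros Htail. rewrite !G_partial_sum.
  apply (eventually_constant_limit
           (fun N => sum_f_R0 (takagi_term y) N - sum_f_R0 (takagi_term x) N) _ _ K).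
  - apply CV_minus; apply HT.
  - intros N HN. induction HN as [|N HN IH]; [reflexivity|].
    simpl. rewrite Htail by lia. lra.
Qed.

Lemma takagi_term_shift (x h : R) (j : nat) (k : Z) :
  2 ^ j * h = IZR k -> takagi_term (x + h) j = takagi_term x j.
Proof.
  intros Hk. unfold takagi_term. now rewrite Rmult_plus_distr_l, Hk, phi_periodic.
Qed.

Lemma quarter_shift_integer (n j : nat) (sigma : R) :
  (sigma = 1 \/ sigma = -1) -> (n + 2 <= j)%nat ->
  exists k : Z, 2 ^ j * (sigma / (4 * 2 ^ n)) = IZR k.
Proof.
  intros Hs Hj. destruct (pow2_int (j - (n + 2))) as [k Hk].
  assert (Ej : 2 ^ j = 2 ^ (j - (n + 2)) * 4 * 2 ^ n).
  { replace j with ((j - (n + 2)) + 2 + n)%nat at 1 by lia.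
    rewrite !pow_add. simpl. ring. }
  pose proof (pow2_pos n).
  destruct Hs as [-> | ->]; [exists k | exists (- k)%Z];
    rewrite ?opp_IZR, <- Hk, Ej; field; lra.
Qed.

Lemma Int_part_quarter_step (s : R) : Int_part (s + dphi s / 4) = Int_part s.
Proof.
  pose proof (Int_part_bounds s). apply Int_part_eq.
  unfold dphi, frac_part in *. destruct Rlt_dec; lra.
Qed.

Lemma phi_quarter_step (s : R) :
  0 <= phi (s + dphi s / 4) - phi s + (phi (2 * s + dphi s / 2) - phi (2 * s)) / 2.
Proof.
  pose proof (Int_part_bounds s) as [A1 A2].
  set (k := Int_part s) in *.
  assert (E1 : IZR (2 * k) = 2 * IZR k) by (rewrite mult_IZR; reflexivity).
  assert (E2 : IZR (2 * k + 1) = 2 * IZR k + 1) by (rewrite plus_IZR, mult_IZR; reflexivity).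
  unfold dphi, frac_part. fold k. destruct Rlt_dec as [Hs|Hs].
  - rewrite (phi_left k s) by lra.
    destruct (Rle_dec s (IZR k + 1/4)).
    + rewrite (phi_left k (s + 1/4)), (phi_left (2 * k) (2 * s)),
        (phi_right (2 * k) (2 * s + 1/2)) by lra. lra.
    + rewrite (phi_right k (s + 1/4)), (phi_right (2 * k) (2 * s)),
        (phi_left (2 * k + 1) (2 * s + 1/2)) by lra. lra.
  - rewrite (phi_right k s) by lra.
    destruct (Rle_dec s (IZR k + 3/4)).
    + rewrite (phi_left k (s + -1/4)), (phi_left (2 * k + 1) (2 * s)),
        (phi_right (2 * k) (2 * s + -1/2)) by lra. lra.
    + rewrite (phi_right k (s + -1/4)), (phi_right (2 * k + 1) (2 * s)),
        (phi_left (2 * k + 1) (2 * s + -1/2)) by lra. lra.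
Qed.

Lemma takagi_dyadic_step (T : R -> R)
  (HT : forall y, infinite_sum (takagi_term y) (T y)) (x : R) (n : nat) :
  slope n x * (dphi (2 ^ n * x) / (4 * 2 ^ n))
  <= T (x + dphi (2 ^ n * x) / (4 * 2 ^ n)) - T x.
Proof.
  set (s := 2 ^ n * x). set (h := dphi s / (4 * 2 ^ n)).
  pose proof (pow2_pos n).
  rewrite (takagi_difference T HT (x + h) x (S n)).
  2: { intros j Hj. destruct (quarter_shift_integer n j (dphi s) (dphi_pm1 s)) as [k Hk];
       [lia | exact (takagi_term_shift x h j k Hk)]. }
  assert (Hs1 : 2 ^ n * (x + h) = s + dphi s / 4) by (unfold h, s; field; lra).
  assert (Hs2 : 2 ^ S n * (x + h) = 2 * s + dphi s / 2)
    by (unfold h, s; simpl pow; field; lra).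
  assert (Hs3 : 2 ^ S n * x = 2 * s) by (unfold s; simpl pow; ring).
  assert (HG : G n (x + h) - G n x = slope n x * h).
  { replace h with (x + h - x) at 2 by ring. apply G_affine.
    fold s. rewrite Hs1, Int_part_quarter_step. reflexivity. }
  assert (Hgain : 0 <= (phi (s + dphi s / 4) - phi s
                        + (phi (2 * s + dphi s / 2) - phi (2 * s)) / 2) / 2 ^ n)
    by (apply Rmult_le_pos; [apply phi_quarter_step | left; apply Rinv_0_lt_compat; lra]).
  rewrite !G_succ. unfold takagi_term. rewrite Hs1, Hs2, Hs3. fold s.
  replace (2 ^ S n) with (2 * 2 ^ n) by reflexivity.
  assert (Hterms : phi (s + dphi s / 4) / 2 ^ n + phi (2 * s + dphi s / 2) / (2 * 2 ^ n)
                   - (phi s / 2 ^ n + phi (2 * s) / (2 * 2 ^ n))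
                   = (phi (s + dphi s / 4) - phi s
                      + (phi (2 * s + dphi s / 2) - phi (2 * s)) / 2) / 2 ^ n)
    by (field; lra).
  lra.
Qed.

Lemma superdiff_bound (f : R -> R) (x xi eps : R) :
  frechet_superdiff f x xi -> eps > 0 ->
  exists delta, delta > 0 /\ forall h, h <> 0 -> Rabs h < delta ->
    f (x + h) - f x - xi * h <= eps * Rabs h.
Proof.
  intros Hsd Heps. destruct (Hsd eps Heps) as [delta [Hdelta Hd]].
  exists delta. split; [exact Hdelta|]. intros h Hh Hlt.
  pose proof (Rabs_pos_lt h Hh).
  replace (f (x + h) - f x - xi * h) with ((f (x + h) - f x - xi * h) / Rabs h * Rabs h)
    by (field; lra).
  apply Rmult_le_compat_r; [lra | apply Hd; assumption].
Qed.

Lemma dyadic_small (delta : R) : delta > 0 ->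
  exists N, forall n, (N <= n)%nat -> / (4 * 2 ^ n) < delta.
Proof.
  intros Hdelta.
  assert (Hhalf : Rabs (/ 2) < 1) by (rewrite Rabs_right; lra).
  destruct (pow_lt_1_zero (/ 2) Hhalf delta Hdelta) as [N HN].
  exists N. intros n Hn. specialize (HN n Hn).
  rewrite pow_inv, Rabs_right in HN by (left; apply Rinv_0_lt_compat, pow2_pos).
  pose proof (pow2_pos n).
  assert (/ (4 * 2 ^ n) < / 2 ^ n) by (apply Rinv_lt_contravar; nra).
  lra.
Qed.

Lemma superdiff_slope_constraint (T : R -> R)
  (HT : forall y, infinite_sum (takagi_term y) (T y)) (x xi : R) :
  frechet_superdiff T x xi -> forall eps, eps > 0 ->
  exists N, forall n, (N <= n)%nat -> dphi (2 ^ n * x) * (slope n x - xi) <= eps.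
Proof.
  intros Hsd eps Heps.
  destruct (superdiff_bound T x xi eps Hsd Heps) as [delta [Hdelta Hbound]].
  destruct (dyadic_small delta Hdelta) as [N HN].
  exists N. intros n Hn.
  pose proof (takagi_dyadic_step T HT x n) as Hstep.
  set (sigma := dphi (2 ^ n * x)) in *.
  set (r := / (4 * 2 ^ n)) in *.
  assert (Hr : 0 < r) by (apply Rinv_0_lt_compat; pose proof (pow2_pos n); lra).
  assert (Habs : Rabs (sigma * r) = r)
    by (destruct (dphi_pm1 (2 ^ n * x)) as [E|E]; fold sigma in E; rewrite E;
        [rewrite Rabs_right | rewrite Rabs_left]; lra).
  assert (Hsr : sigma * r <> 0) by (intro E; rewrite E, Rabs_R0 in Habs; lra).
  specialize (Hbound (sigma * r) Hsr). rewrite Habs in Hbound.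
  specialize (Hbound (HN n Hn)).
  unfold Rdiv in Hstep. fold r in Hstep.
  apply (Rmult_le_reg_r r); [exact Hr|]. nra.
Qed.

Definition restoring_walk (u : nat -> R) (c eps : R) (N : nat) : Prop :=
  forall n, (N <= n)%nat -> exists sigma, (sigma = 1 \/ sigma = -1) /\
    u (S n) = u n + sigma /\ sigma * (u n - c) <= eps.

Lemma restoring_walk_opp (u : nat -> R) (c eps : R) (N : nat) :
  restoring_walk u c eps N -> restoring_walk (fun n => - u n) (- c) eps N.
Proof.
  intros Hw n Hn. destruct (Hw n Hn) as [sigma [Hs [Hstep Hdir]]].
  exists (- sigma). split; [destruct Hs as [-> | ->]; [right | left]; ring|].
  split; [rewrite Hstep; ring | lra].
Qed.

Lemma restoring_walk_upper (u : nat -> R) (c eps : R) (N : nat) :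
  restoring_walk u c eps N ->
  forall m n, (N <= m)%nat -> (m <= n)%nat -> u n <= Rmax (u m) (c + 1 + eps).
Proof.
  intros Hw m n Hm Hmn. induction Hmn as [|n Hmn IH]; [apply Rmax_l|].
  destruct (Hw n ltac:(lia)) as [sigma [[-> | ->] [Hstep Hdir]]]; rewrite Hstep.
  - pose proof (Rmax_r (u m) (c + 1 + eps)). lra.
  - lra.
Qed.

Lemma restoring_walk_lower (u : nat -> R) (c eps : R) (N : nat) :
  restoring_walk u c eps N ->
  forall m n, (N <= m)%nat -> (m <= n)%nat -> Rmin (u m) (c - 1 - eps) <= u n.
Proof.
  intros Hw m n Hm Hmn.
  pose proof (restoring_walk_upper _ _ _ _ (restoring_walk_opp u c eps N Hw) m n Hm Hmn) as H.
  simpl in H. replace (- c + 1 + eps) with (- (c - 1 - eps)) in H by ring.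
  rewrite <- Ropp_Rmin in H. lra.
Qed.

Lemma bounded_not_infinite (u : nat -> R) (N : nat) (lo hi : R) :
  (forall n, (N <= n)%nat -> lo <= u n <= hi) ->
  ~ (limsup_pinfty u \/ limsup_minfty u \/ liminf_pinfty u \/ liminf_minfty u).
Proof.
  intros Hb [H | [H | [H | H]]].
  - destruct (H hi N) as [n [Hn Hu]]. specialize (Hb n Hn). lra.
  - destruct (H lo) as [N1 HN1].
    specialize (HN1 (max N N1) ltac:(lia)). specialize (Hb (max N N1) ltac:(lia)). lra.
  - destruct (H hi) as [N1 HN1].
    specialize (HN1 (max N N1) ltac:(lia)). specialize (Hb (max N N1) ltac:(lia)). lra.
  - destruct (H lo N) as [n [Hn Hu]]. specialize (Hb n Hn). lra.
Qed.

Lemma restoring_walk_oscillation (u : nat -> R) (c Ls Li : R) :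
  (forall eps, eps > 0 -> exists N, restoring_walk u c eps N) ->
  limsup_is u Ls -> liminf_is u Li -> Ls - Li <= 2.
Proof.
  intros Hwalk Hs Hi. apply Rnot_gt_le. intros Hgap.
  set (e := (Ls - Li - 2) / 4). assert (He : e > 0) by (unfold e; lra).
  destruct (Hwalk e He) as [N HN].
  destruct (Hs e He) as [_ Hhigh]. destruct (Hi e He) as [_ Hlow].
  (* from a high value the walk can only sink to c - 1 - e *)
  destruct (Hhigh N) as [m1 [Hm1 Hu1]]. destruct (Hlow m1) as [n1 [Hn1 Hv1]].
  pose proof (restoring_walk_lower u c e N HN m1 n1 Hm1 Hn1) as Hsink.
  (* from a low value the walk can only rise to c + 1 + e *)
  destruct (Hlow N) as [m2 [Hm2 Hu2]]. destruct (Hhigh m2) as [n2 [Hn2 Hv2]].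
  pose proof (restoring_walk_upper u c e N HN m2 n2 Hm2 Hn2) as Hrise.
  unfold Rmin, Rmax in *. destruct Rle_dec; destruct Rle_dec; unfold e in *; lra.
Qed.

Lemma superdiff_restoring_walk (T : R -> R)
  (HT : forall y, infinite_sum (takagi_term y) (T y))
  (x : R) (hx : ~ in_D x) (d : nat -> R)
  (hd : forall n, (1 <= n)%nat -> derivable_pt_lim (G n) x (d n)) (xi : R) :
  frechet_superdiff T x xi -> forall eps, eps > 0 -> exists N, restoring_walk d xi eps N.
Proof.
  intros Hsd eps Heps.
  destruct (superdiff_slope_constraint T HT x xi Hsd eps Heps) as [N HN].
  exists (S N). intros n Hn. exists (dphi (2 ^ n * x)).
  rewrite !(derivatives_are_slopes x hx d hd) by lia.
  split; [apply dphi_pm1 | split; [reflexivity | apply HN; lia]].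
Qed.

Theorem corollary2p2 (T : R -> R)
  (HT : forall y, infinite_sum (takagi_term y) (T y))
  (x : R) (hx : ~ in_D x)
  (d : nat -> R)
  (hd : forall n, (1 <= n)%nat -> derivable_pt_lim (G n) x (d n)) :
  ((limsup_pinfty d \/ limsup_minfty d \/ liminf_pinfty d \/ liminf_minfty d)
   \/ (exists Ls Li, limsup_is d Ls /\ liminf_is d Li /\ Ls - Li > 2)) ->
  forall xi, ~ frechet_superdiff T x xi.
Proof.
  intros Hosc xi Hsd.
  pose proof (superdiff_restoring_walk T HT x hx d hd xi Hsd) as Hwalk.
  destruct Hosc as [Hinfinite | [Ls [Li [Hs [Hi Hgap]]]]].
  - destruct (Hwalk 1 Rlt_0_1) as [N HN].
    apply (bounded_not_infinite d N (Rmin (d N) (xi - 1 - 1)) (Rmax (d N) (xi + 1 + 1)));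
      [|exact Hinfinite].
    intros n Hn. split.
    + exact (restoring_walk_lower d xi 1 N HN N n (le_n N) Hn).
    + exact (restoring_walk_upper d xi 1 N HN N n (le_n N) Hn).
  - pose proof (restoring_walk_oscillation d xi Ls Li Hwalk Hs Hi). lra.
Qed.
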